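(* Consider the iterates $x_k,y_k,u_k$ of the mirror triangle method with inexact directional derivatives (see context). For every $k\ge0$, $x_{k+1}$ and $y_{k+1}$ are convex combinations of $u_0,\dots,u_{k+1}$. Moreover $x_{k+1}=\sum_{l=0}^{k+1}\gamma_{k+1}^lu_l$, where $\gamma_0^0=1$, $\gamma_1^0=0$, $\gamma_1^1=1$, and for $k\ge1$ $$\gamma_{k+1}^l=\begin{cases}\big(1-\frac{\alpha_{k+1}}{A_{k+1}}\big)\gamma_k^l,& l=0,\dots,k-1,\\ \frac{\alpha_{k+1}}{A_{k+1}}\big(1-n\frac{\alpha_k}{A_k}\big)+n\big(\frac{\alpha_k}{A_k}-\frac{\alpha_{k+1}}{A_{k+1}}\big),& l=k,\\ n\frac{\alpha_{k+1}}{A_{k+1}},& l=k+1.\end{cases}$$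
   Context: Here $n\ge1$ is the dimension of $\mathbb{R}^n$ and $\|x\|_L^2=L\sum_ix_i^2$ for some $L>0$. The method: $x_0=u_0=y_0\in\mathbb{R}^n$, $\alpha_0=1-\frac1n$, $A_0=\alpha_0$; for $k\ge0$: $\alpha_{k+1}=\frac{k+2n}{2n^2}$, $A_{k+1}=A_k+\alpha_{k+1}$, $y_{k+1}=\frac{\alpha_{k+1}u_k+A_kx_k}{A_{k+1}}$, $u_{k+1}=\arg\min_{x\in\mathbb{R}^n}\{\frac12\|x-u_k\|_L^2+\alpha_{k+1}\langle g_{k+1},x\rangle\}$ for some vector $g_{k+1}$ (in the method, $g_{k+1}=n(\langle\nabla f(y_{k+1}),e_{k+1}\rangle+\tilde\delta_{k+1})e_{k+1}$), and $x_{k+1}=y_{k+1}+n\frac{\alpha_{k+1}}{A_{k+1}}(u_{k+1}-u_k)$. *)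

From mathcomp Require Import all_boot all_order all_algebra.
Set Implicit Arguments. Unset Strict Implicit. Unset Printing Implicit Defensive.
Import Order.TTheory GRing.Theory Num.Theory.
Local Open Scope ring_scope.

Section MTM.
Variable R : realFieldType.

Definition alpha (n k : nat) : R :=
  match k with
  | 0 => 1 - (n%:R)^-1
  | k'.+1 => (k'%:R + 2 * n%:R) / (2 * n%:R ^+ 2)
  end.

Fixpoint Acoef (n k : nat) : R :=
  match k with
  | 0 => alpha n 0
  | k'.+1 => Acoef n k' + alpha n k'.+1
  end.

Definition sqnormL (n : nat) (L : R) (v : 'rV[R]_n) : R :=
  L * \sum_(i < n) (v 0 i) ^+ 2.

Definition dotp (n : nat) (g v : 'rV[R]_n) : R := \sum_(i < n) g 0 i * v 0 i.

Fixpoint gamma (n k : nat) : nat -> R :=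
  match k with
  | 0 => fun l => if l == 0%N then 1 else 0
  | k'.+1 =>
    match k' with
    | 0 => fun l => if l == 1%N then 1 else 0
    | _ =>
      let g := gamma n k' in
      fun l =>
        if (l < k')%N then (1 - alpha n k / Acoef n k) * g l
        else if l == k' then
          alpha n k / Acoef n k * (1 - n%:R * (alpha n k' / Acoef n k'))
          + n%:R * (alpha n k' / Acoef n k' - alpha n k / Acoef n k)
        else if l == k then n%:R * (alpha n k / Acoef n k)
        else 0
    end
  end.

End MTM.

From mathcomp Require Import all_boot all_order all_algebra.
From mathcomp Require Import ring lra.
Set Implicit Arguments. Unset Strict Implicit. Unset Printing Implicit Defensive.
Import Order.TTheory GRing.Theory Num.Theory.
Local Open Scope ring_scope.

(* With beta_k = alpha_k / A_k and tau_k = n beta_k, the two update rules read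
   y_{k+1} = (1 - beta_{k+1}) x_k + beta_{k+1} u_k and
   x_{k+1} = (1 - beta_{k+1}) x_k + (beta_{k+1} - tau_{k+1}) u_k + tau_{k+1} u_{k+1};
   unrolling the second recursion produces exactly the weights gamma.  From the
   closed form A_{k+1} = ((2n + k)^2 + k) / (4n^2) one gets beta, tau in [0, 1]
   and tau nonincreasing, which makes every weight nonnegative; the weights sum
   to 1 because the recursion maps the constant sequence 1 to itself.  Then
   y_{k+1} is a convex combination of x_k and u_k. *)

Section ConvexCombination.
Variables (R : numDomainType) (V : lmodType R) (u : nat -> V).

Definition conv_comb (k : nat) (v : V) :=
  exists w : nat -> R,
    [/\ forall l, (l <= k)%N -> 0 <= w l,
        \sum_(l < k.+1) w l = 1
      & v = \sum_(l < k.+1) w l *: u l].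

Lemma conv_comb_widen k v : conv_comb k v -> conv_comb k.+1 v.
Proof.
case=> w [w_ge0 w_sum ->]; exists (fun l => if (l <= k)%N then w l else 0).
split=> [l _||]; first by case: ifP => // /w_ge0.
- rewrite big_ord_recr /= ltnn addr0 -w_sum.
  by apply: eq_bigr => i _; rewrite -ltnS ltn_ord.
- rewrite [RHS]big_ord_recr /= ltnn scale0r addr0.
  by apply: eq_bigr => i _; rewrite -ltnS ltn_ord.
Qed.

Lemma conv_comb_mem k l : (l <= k)%N -> conv_comb k (u l).
Proof.
rewrite -ltnS => lk; exists (fun i => (i == l)%:R); split=> [i _||].
- exact: ler0n.
- rewrite (bigD1 (Ordinal lk)) //= eqxx big1 ?addr0 // => i.
  by rewrite -val_eqE => /negPf ->.
- rewrite (bigD1 (Ordinal lk)) //= eqxx scale1r big1 ?addr0 // => i.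
  by rewrite -val_eqE => /negPf ->; rewrite scale0r.
Qed.

Lemma conv_comb_mix k b v v' : 0 <= b <= 1 ->
  conv_comb k v -> conv_comb k v' -> conv_comb k ((1 - b) *: v + b *: v').
Proof.
case/andP=> b_ge0 b_le1 [w [w_ge0 w_sum ->]] [w' [w'_ge0 w'_sum ->]].
exists (fun l => (1 - b) * w l + b * w' l); split=> [l lk||].
- by rewrite addr_ge0 ?mulr_ge0 ?w_ge0 ?w'_ge0 ?subr_ge0.
- by rewrite big_split /= -!mulr_sumr w_sum w'_sum !mulr1 subrK.
- under [RHS]eq_bigr do rewrite scalerDl -!scalerA.
  by rewrite big_split /= -!scaler_sumr.
Qed.

End ConvexCombination.

Lemma sum_ord_recr_nat (V : nmodType) (F : nat -> V) k :
  \sum_(l < k.+1) F l = \sum_(l < k) F l + F k.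
Proof. by rewrite big_ord_recr. Qed.

Section Coefficients.
Variables (R : realFieldType) (n : nat).
Hypothesis n_gt0 : (0 < n)%N.
Local Notation N := (n%:R : R).

Definition beta k : R := alpha R n k / Acoef R n k.
Definition tau k : R := N * beta k.

Lemma AcoefS k : Acoef R n k.+1 = Acoef R n k + alpha R n k.+1.
Proof. by []. Qed.

Lemma Acoef_closed k :
  Acoef R n k.+1 = ((2 * N + k%:R) ^+ 2 + k%:R) / (4 * N ^+ 2).
Proof.
have N_neq0 : N != 0 by rewrite pnatr_eq0 -lt0n.
elim: k => [|k IH]; first by rewrite AcoefS /= /alpha; field.
by rewrite AcoefS IH /alpha -addn1 natrD; field.
Qed.

Lemma Acoef_gt0 k : 0 < Acoef R n k.+1.
Proof.
have N_ge1 : 1 <= N by rewrite ler1n.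
have k_ge0 : 0 <= k%:R :> R by rewrite ler0n.
by rewrite Acoef_closed divr_gt0 //; nra.
Qed.

Lemma beta_closed k :
  beta k.+1 = 2 * (2 * N + k%:R) / ((2 * N + k%:R) ^+ 2 + k%:R).
Proof.
have N_ge1 : 1 <= N by rewrite ler1n.
have k_ge0 : 0 <= k%:R :> R by rewrite ler0n.
have D_neq0 : (2 * N + k%:R) ^+ 2 + k%:R != 0 by rewrite gt_eqF //; nra.
by rewrite /beta Acoef_closed /alpha; field; rewrite D_neq0 gt_eqF //; lra.
Qed.

Lemma beta_ge0 k : 0 <= beta k.+1.
Proof.
have N_ge1 : 1 <= N by rewrite ler1n.
have k_ge0 : 0 <= k%:R :> R by rewrite ler0n.
by rewrite beta_closed divr_ge0 //; nra.
Qed.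

Lemma tau_le1 k : tau k.+1 <= 1.
Proof.
have N_ge1 : 1 <= N by rewrite ler1n.
have k_ge0 : 0 <= k%:R :> R by rewrite ler0n.
by rewrite /tau beta_closed mulrA ler_pdivrMr ?mul1r; nra.
Qed.

Lemma beta_le1 k : beta k.+1 <= 1.
Proof.
have N_ge1 : 1 <= N by rewrite ler1n.
by have := tau_le1 k; have := beta_ge0 k; rewrite /tau; nra.
Qed.

Lemma tau_ge0 k : 0 <= tau k.+1.
Proof. by rewrite mulr_ge0 ?ler0n ?beta_ge0. Qed.

Lemma tau1 : tau 1 = 1.
Proof.
have N_neq0 : N != 0 by rewrite pnatr_eq0 -lt0n.
by rewrite /tau beta_closed; field.
Qed.

Lemma tau_nonincreasing k : tau k.+2 <= tau k.+1.
Proof.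
have N_ge1 : 1 <= N by rewrite ler1n.
have k_ge0 : 0 <= k%:R :> R by rewrite ler0n.
pose m := 2 * N + k%:R.
have D_gt0 : 0 < m ^+ 2 + k%:R by rewrite /m; nra.
have D'_gt0 : 0 < (m + 1) ^+ 2 + k%:R + 1 by rewrite /m; nra.
rewrite -subr_ge0.
have -> : tau k.+1 - tau k.+2 =
    2 * N * (m ^+ 2 + 2 * m - k%:R) / ((m ^+ 2 + k%:R) * ((m + 1) ^+ 2 + k%:R + 1)).
  rewrite /tau !beta_closed -[k.+1%:R]natr1 /m.
  by field; rewrite !gt_eqF.
by rewrite divr_ge0 ?mulr_ge0 //; rewrite /m; nra.
Qed.

Lemma one_sub_beta k : 1 - beta k.+1 = Acoef R n k / Acoef R n k.+1.
Proof.
have := lt0r_neq0 (Acoef_gt0 k).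
by rewrite /beta AcoefS => A_neq0; field.
Qed.

Lemma gammaSS k l : gamma R n k.+2 l =
  if (l < k.+1)%N then (1 - beta k.+2) * gamma R n k.+1 l
  else if l == k.+1 then beta k.+2 * (1 - tau k.+1) + (tau k.+1 - tau k.+2)
  else if l == k.+2 then tau k.+2 else 0.
Proof. by rewrite /tau -mulrBr. Qed.

Lemma gamma_diag k : gamma R n k.+1 k.+1 = tau k.+1.
Proof.
by case: k => [|k]; rewrite ?tau1 // gammaSS ltnNge leqnSn gtn_eqF // eqxx.
Qed.

Lemma gamma_ge0 k l : 0 <= gamma R n k l.
Proof.
elim: k l => [|[|k] IH] l /=; try by case: eqP.
rewrite -/(gamma R n k.+2 l) gammaSS.
case: ifP => _; first by rewrite mulr_ge0 ?subr_ge0 ?beta_le1.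
case: ifP => _; last by case: ifP => _; rewrite ?tau_ge0.
apply: addr_ge0; first by rewrite mulr_ge0 ?beta_ge0 // subr_ge0 tau_le1.
by rewrite subr_ge0 tau_nonincreasing.
Qed.

Lemma sum_gammaSS (V : lmodType R) (F : nat -> V) k :
  \sum_(l < k.+3) gamma R n k.+2 l *: F l =
  (1 - beta k.+2) *: \sum_(l < k.+2) gamma R n k.+1 l *: F l
  + (beta k.+2 - tau k.+2) *: F k.+1 + tau k.+2 *: F k.+2.
Proof.
rewrite 2!(sum_ord_recr_nat (fun l => gamma R n k.+2 l *: F l)).
rewrite (sum_ord_recr_nat (fun l => gamma R n k.+1 l *: F l)) scalerDr -addrA.
rewrite gammaSS ltnn eqxx !gamma_diag scaler_sumr -!addrA; congr (_ + _).
  by apply: eq_bigr => i _; rewrite gammaSS ltn_ord scalerA.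
by rewrite scalerA addrA -scalerDl; congr (_ *: _ + _); ring.
Qed.

Lemma gamma_comb (V : lmodType R) (x u : nat -> V) :
  x 0%N = u 0%N ->
  (forall k, x k.+1 = (1 - beta k.+1) *: x k + (beta k.+1 - tau k.+1) *: u k
                      + tau k.+1 *: u k.+1) ->
  forall k, x k = \sum_(l < k.+1) gamma R n k l *: u l.
Proof.
move=> x0 xS; elim=> [|[|k] IH]; first by rewrite big_ord1 scale1r.
  rewrite xS x0 tau1 !big_ord_recr big_ord0 /= scale0r scale1r add0r.
  by rewrite -scalerDl subrKA subrr scale0r add0r.
by rewrite sum_gammaSS xS IH.
Qed.

Lemma sum_gamma k : \sum_(l < k.+1) gamma R n k l = 1.
Proof.
have one_comb j : 1 = (1 - beta j.+1) *: 1 + (beta j.+1 - tau j.+1) *: 1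
                      + tau j.+1 *: (1 : R^o).
  by rewrite /GRing.scale /= !mulr1 subrKA subrK.
rewrite [RHS](@gamma_comb R^o (fun=> 1) (fun=> 1) erefl one_comb k).
by apply: eq_bigr => i _; rewrite [RHS]mulr1.
Qed.

End Coefficients.

Section Iterates.
Variables (R : realFieldType) (n : nat) (V : lmodType R) (x y u : nat -> V).
Hypothesis n_gt0 : (0 < n)%N.
Hypothesis y_def : forall k,
  y k.+1 = (Acoef R n k.+1)^-1 *: (alpha R n k.+1 *: u k + Acoef R n k *: x k).
Hypothesis x_def : forall k,
  x k.+1 = y k.+1 + (n%:R * (alpha R n k.+1 / Acoef R n k.+1)) *: (u k.+1 - u k).

Lemma y_step k : y k.+1 = (1 - beta R n k.+1) *: x k + beta R n k.+1 *: u k.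
Proof.
rewrite y_def one_sub_beta // scalerDr !scalerA addrC.
by congr (_ *: _ + _ *: _); apply: mulrC.
Qed.

Lemma x_step k :
  x k.+1 = (1 - beta R n k.+1) *: x k + (beta R n k.+1 - tau R n k.+1) *: u k
           + tau R n k.+1 *: u k.+1.
Proof.
rewrite x_def y_step -/(tau R n k.+1) scalerBr.
rewrite [(_ - tau _ _ _) *: _]scalerBl -!addrA.
by congr (_ + (_ + _)); apply: addrC.
Qed.

End Iterates.

Theorem lemma12 (R : realFieldType) (n : nat) (L : R)
  (x y u g : nat -> 'rV[R]_n) :
  (0 < n)%N -> 0 < L ->
  x 0%N = u 0%N -> y 0%N = u 0%N ->
  (forall k : nat,
     y k.+1 = (Acoef R n k.+1)^-1 *:
                (alpha R n k.+1 *: u k + Acoef R n k *: x k)) ->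
  (forall (k : nat) (z : 'rV[R]_n),
     2^-1 * sqnormL L (u k.+1 - u k) + alpha R n k.+1 * dotp (g k.+1) (u k.+1)
     <= 2^-1 * sqnormL L (z - u k) + alpha R n k.+1 * dotp (g k.+1) z) ->
  (forall k : nat,
     x k.+1 = y k.+1 + (n%:R * (alpha R n k.+1 / Acoef R n k.+1)) *: (u k.+1 - u k)) ->
  forall k : nat,
    [/\ (exists w : nat -> R,
           [/\ forall l : nat, (l <= k.+1)%N -> 0 <= w l,
               \sum_(l < k.+2) w l = 1
             & x k.+1 = \sum_(l < k.+2) w l *: u l]),
        (exists w : nat -> R,
           [/\ forall l : nat, (l <= k.+1)%N -> 0 <= w l,
               \sum_(l < k.+2) w l = 1
             & y k.+1 = \sum_(l < k.+2) w l *: u l])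
      & x k.+1 = \sum_(l < k.+2) gamma R n k.+1 l *: u l].
Proof.
move=> n_gt0 _ x0 _ y_def _ x_def.
have x_gamma := gamma_comb n_gt0 x0 (x_step n_gt0 y_def x_def).
have x_conv k : conv_comb u k (x k).
  exists (gamma R n k); split=> [l _||]; last exact: x_gamma.
    exact: gamma_ge0.
  exact: sum_gamma.
move=> k; split; [exact: x_conv | | exact: x_gamma].
rewrite (y_step n_gt0 y_def); apply/conv_comb_widen/conv_comb_mix.
- by rewrite beta_ge0 ?beta_le1.
- exact: x_conv.
- exact: conv_comb_mem.
Qed.
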